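(* Let $k\ge 1$ and $p\ge k+1$ be integers and let $G$ be a graph with a $k$-degenerate ordering $(v_1,\dots,v_n)$ of $V(G)$. If there exists $\ell\in[n]$ such that $\{v_1,\dots,v_\ell\}$ is a vertex cover of $G$, then $\mathrm{id}^{\leq p}(G)\le \ell$. In particular, every $k$-degenerate graph $G$ satisfies $\mathrm{id}^{\leq p}(G)\le |V(G)|-1$ for every $p\ge k+1$.
   Context: A $k$-degenerate ordering of $G$ is an ordering $(v_1,\dots,v_n)$ of $V(G)$ such that each $v_i$ has at most $k$ neighbours in $\{v_{i+1},\dots,v_n\}$; $G$ is $k$-degenerate if it has such an ordering. For an oriented graph $D$ and $X\subseteq V(D)$, the inversion of $X$ reverses every arc with both endvertices in $X$; a $(\leq p)$-inversion is the inversion of a set of at most $p$ vertices. $\mathrm{id}^{\leq p}(G)$ is the maximum, over all ordered pairs $(\vec G_1,\vec G_2)$ of orientations of $G$, of the minimum number of $(\leq p)$-inversions transforming $\vec G_1$ into $\vec G_2$. *)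

From mathcomp Require Import all_boot.
Set Implicit Arguments. Unset Strict Implicit. Unset Printing Implicit Defensive.

Definition simple_graph (T : finType) (e : rel T) : Prop :=
  symmetric e /\ irreflexive e.

(* An orientation of G: a relation o (o x y = "arc x -> y") such that arcs are
   edges of G and each edge receives exactly one direction. *)
Definition orientation (T : finType) (e : rel T) (o : rel T) : Prop :=
  (forall x y, o x y -> e x y) /\ (forall x y, e x y -> o x y (+) o y x).

Definition invert (T : finType) (X : {set T}) (o : rel T) : rel T :=
  fun x y => if (x \in X) && (y \in X) then o y x else o x y.

Definition invert_seq (T : finType) (Xs : seq {set T}) (o : rel T) : rel T :=
  foldl (fun o' X => invert X o') o Xs.

(* id^{<=p}(G) <= m : for every ordered pair (D1, D2) of orientations of G,
   D1 can be transformed into D2 by at most m (<= p)-inversions. *)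
Definition inv_diam_le (T : finType) (e : rel T) (p m : nat) : Prop :=
  forall D1 D2 : rel T, orientation e D1 -> orientation e D2 ->
    exists Xs : seq {set T},
      [/\ size Xs <= m, all (fun X : {set T} => #|X| <= p) Xs &
          forall x y, invert_seq Xs D1 x y = D2 x y].

(* An ordering (v_1, ..., v_n) of V(G): a duplicate-free list of all vertices.
   (v_{i+1} is nth _ s i, 0-based.) *)
Definition vertex_ordering (T : finType) (s : seq T) : Prop :=
  uniq s /\ forall x, x \in s.

Definition degenerate_ordering (T : finType) (e : rel T) (k : nat) (s : seq T) : Prop :=
  vertex_ordering s /\
  forall x, x \in s -> #|[set y | e x y & index x s < index y s]| <= k.

Definition k_degenerate (T : finType) (e : rel T) (k : nat) : Prop :=
  exists s, degenerate_ordering e k s.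

Definition vertex_cover (T : finType) (e : rel T) (C : pred T) : Prop :=
  forall x y, e x y -> C x || C y.

From mathcomp Require Import all_boot zify.

Set Implicit Arguments.
Unset Strict Implicit.
Unset Printing Implicit Defensive.

(* Process the vertices v_1, ..., v_l in order.  At step i, invert the set
   consisting of v_i and those later neighbours u of v_i for which the arc
   between v_i and u is not yet oriented as in the target; this fixes every
   arc from v_i to a later vertex and leaves the arcs at earlier vertices
   untouched.  By degeneracy the set has at most k + 1 <= p vertices, and since
   v_1, ..., v_l cover all edges, every edge has been fixed after l steps. *)

Section Inversions.
Variables (T : finType) (e : rel T).

Lemma orientationC {o : rel T} {x y : T} :
  orientation e o -> e x y -> o y x = ~~ o x y.
Proof. by case=> _ o_edge /o_edge; case: (o x y); case: (o y x). Qed.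

Lemma invert_notin (X : {set T}) (o : rel T) x y :
  x \notin X -> invert X o x y = o x y.
Proof. by rewrite /invert => /negbTE ->. Qed.

Lemma invert_seq_rcons (Xs : seq {set T}) X (o : rel T) :
  invert_seq (rcons Xs X) o = invert X (invert_seq Xs o).
Proof. exact: foldl_rcons. Qed.

Hypothesis e_sym : symmetric e.

Lemma orientation_invert (X : {set T}) o :
  orientation e o -> orientation e (invert X o).
Proof.
move=> [o_sub o_edge]; split=> x y; rewrite /invert.
  by case: ifP => _ /o_sub //; rewrite e_sym.
rewrite [(y \in X) && _]andbC; case: ifP => _ exy; last exact: o_edge.
by apply: o_edge; rewrite e_sym.
Qed.

Lemma orientation_invert_seq (Xs : seq {set T}) o :
  orientation e o -> orientation e (invert_seq Xs o).
Proof.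
elim/last_ind: Xs => [//|Xs X IH] /IH.
by rewrite invert_seq_rcons; apply: orientation_invert.
Qed.

Hypothesis e_irr : irreflexive e.
Variable r : T -> nat.
Hypothesis r_inj : injective r.

Lemma orientation_eq_forward (o1 o2 : rel T) :
  orientation e o1 -> orientation e o2 ->
  (forall x y, e x y -> r x < r y -> o1 x y = o2 x y) -> o1 =2 o2.
Proof.
move=> O1 O2 fwd x y; have [exy|nexy] := boolP (e x y); last first.
  by apply/idP/idP => [/O1.1|/O2.1]; rewrite (negbTE nexy).
have [lt_xy|lt_yx|/r_inj eq_xy] := ltngtP (r x) (r y); first exact: fwd.
  have eyx : e y x by rewrite e_sym.
  by rewrite (orientationC O1 eyx) (orientationC O2 eyx) fwd.
by move: exy; rewrite eq_xy e_irr.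
Qed.

Definition repair_set (D D2 : rel T) (v : T) : {set T} :=
  v |: [set u | e v u & (r v < r u) && (D v u != D2 v u)].

Lemma card_repair_set (D D2 : rel T) v :
  #|repair_set D D2 v| <= #|[set u | e v u & r v < r u]|.+1.
Proof.
rewrite cardsU1 -[leqRHS]add1n leq_add ?leq_b1 // subset_leq_card //.
by apply/subsetP=> u; rewrite !inE => /andP[-> /andP[-> _]].
Qed.

Lemma repair_set_rank (D D2 : rel T) v u :
  u \in repair_set D D2 v -> r v <= r u.
Proof. by rewrite !inE => /orP[/eqP -> //|/and3P[_ /ltnW]]. Qed.

Lemma invert_repair_set (D D2 : rel T) v y :
  orientation e D -> e v y -> r v < r y ->
  invert (repair_set D D2 v) D v y = D2 v y.
Proof.
move=> OD evy lt_vy.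
have yv : y != v by apply: contraTneq evy => ->; rewrite e_irr.
rewrite /invert setU11 !inE (negbTE yv) evy lt_vy /=.
have [neq|] := boolP (D v y != D2 v y); last by move/negPn/eqP.
by rewrite (orientationC OD evy); case: (D v y) (D2 v y) neq => [] [].
Qed.

End Inversions.

Section DegenerateOrdering.
Variables (T : finType) (e : rel T) (k : nat) (s : seq T).
Hypotheses (e_sym : symmetric e) (e_irr : irreflexive e).
Hypothesis s_deg : degenerate_ordering e k s.

Let rank (x : T) := index x s.

Lemma rank_inj : injective rank.
Proof.
have [[_ s_all] _] := s_deg.
by move=> x y eq_xy; apply: (index_inj x); rewrite ?s_all.
Qed.

Lemma card_vertex_ordering : #|T| = size s.
Proof.
have [[s_uniq s_all] _] := s_deg.
by rewrite -(card_uniqP s_uniq); apply: eq_card => x; rewrite s_all.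
Qed.

Lemma prefix_inversions (D1 D2 : rel T) i :
  i <= size s -> orientation e D1 -> orientation e D2 ->
  exists Xs : seq {set T},
    [/\ size Xs = i, all (fun X : {set T} => #|X| <= k.+1) Xs &
        forall x y, e x y -> rank x < rank y -> rank x < i ->
          invert_seq Xs D1 x y = D2 x y].
Proof.
move=> + O1 O2; elim: i => [_|i IH lt_is]; first by exists [::].
have [Xs [size_Xs card_Xs fixed]] := IH (ltnW lt_is).
have [[s_uniq s_all] s_deg_at] := s_deg.
have x0 : T by case: s lt_is.
pose v := nth x0 s i; have rank_v : rank v = i by apply: index_uniq.
pose D := invert_seq Xs D1.
have OD : orientation e D by apply: orientation_invert_seq.
exists (rcons Xs (repair_set e rank D D2 v)); split.
- by rewrite size_rcons size_Xs.
- rewrite all_rcons card_Xs andbT.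
  by rewrite (leq_trans (card_repair_set _ _ _ _ _)) // ltnS; apply: s_deg_at.
move=> x y exy lt_xy; rewrite invert_seq_rcons ltnS leq_eqVlt.
case/orP=> [/eqP rank_x | lt_xi].
  have x_v : x = v by apply: rank_inj; rewrite rank_x rank_v.
  by rewrite x_v in exy lt_xy *; apply: invert_repair_set.
rewrite invert_notin ?fixed //; apply: contraTN lt_xi.
by move/repair_set_rank; rewrite rank_v -leqNgt.
Qed.

Lemma inv_diam_le_vertex_cover p l :
  k.+1 <= p -> l <= size s ->
  vertex_cover e (fun x => x \in take l s) -> inv_diam_le e p l.
Proof.
move=> le_kp le_ls cover D1 D2 O1 O2.
have [Xs [size_Xs card_Xs fixed]] := prefix_inversions le_ls O1 O2.
exists Xs; split; first by rewrite size_Xs.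
  by apply: sub_all card_Xs => X /leq_trans; apply.
apply: (orientation_eq_forward e_sym e_irr rank_inj) => //.
  exact: orientation_invert_seq.
move=> x y exy lt_xy; apply: fixed => //.
move: (cover x y exy); rewrite !in_take_leq //.
by case/orP=> //; apply: ltn_trans.
Qed.

Lemma vertex_cover_drop_last :
  vertex_cover e (fun x => x \in take (size s).-1 s).
Proof.
have [[_ s_all] _] := s_deg.
move=> x y exy; rewrite !in_take ?s_all //.
have ltx : index x s < size s by rewrite index_mem.
have lty : index y s < size s by rewrite index_mem.
have : rank x <> rank y by move/rank_inj=> xy; rewrite xy e_irr in exy.
rewrite /rank; lia.
Qed.

End DegenerateOrdering.

Theorem mainTheorem16 :
  (forall (T : finType) (e : rel T) (k p : nat) (s : seq T) (l : nat),
     simple_graph e -> 1 <= k -> k.+1 <= p ->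
     degenerate_ordering e k s ->
     1 <= l <= size s ->
     vertex_cover e (fun x => x \in take l s) ->
     inv_diam_le e p l)
  /\
  (forall (T : finType) (e : rel T) (k p : nat),
     simple_graph e -> 1 <= k -> k.+1 <= p ->
     k_degenerate e k ->
     inv_diam_le e p (#|T| - 1)).
Proof.
split=> [T e k p s l [e_sym e_irr] _ le_kp s_deg /andP[_ le_ls]|].
  exact: (inv_diam_le_vertex_cover e_sym e_irr s_deg le_kp le_ls).
move=> T e k p [e_sym e_irr] _ le_kp [s s_deg].
rewrite (card_vertex_ordering s_deg) subn1.
apply: (inv_diam_le_vertex_cover e_sym e_irr s_deg le_kp (leq_pred _)).
exact: vertex_cover_drop_last e_irr s_deg.
Qed.
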